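(* Let $k\ge1$, let $(A,t)$ be a $\mathcal{C}_k$-algebra and $F\subseteq A$. Then $F$ is a cyclic deductive system of $A$ if and only if $F$ is a $c$-filter of $A$.
   Context: A modal pseudocomplemented De Morgan algebra ($mpM$-algebra) is an algebra $\langle A,\wedge,\vee,\sim,{}^\ast,0,1\rangle$ such that $\langle A,\wedge,\vee,\sim,0,1\rangle$ is a De Morgan algebra (bounded distributive lattice with $\sim\sim x=x$, $\sim(x\vee y)=\sim x\wedge\sim y$), $x^\ast$ is the pseudocomplement of $x$, and $x\vee\sim x\le x\vee x^\ast$. Put $\nabla x=\sim(\sim x\wedge x^\ast)$, $\triangle x=\sim\nabla\sim x$. A $\mathcal{C}_k$-algebra ($k\ge1$) is a pair $(A,t)$ with $A$ an $mpM$-algebra and $t$ an $mpM$-automorphism of $A$ with $t^k=\mathrm{id}$. The cyclic implication is $a\rightharpoondown b=\bigvee_{i=1}^{k}\nabla(\sim t^i(a))\vee b$. A cyclic deductive system is a set $D\subseteq A$ with $1\in D$ such that $x\in D$ and $x\rightharpoondown y\in D$ imply $y\in D$. A $c$-filter is a lattice filter $F$ of $A$ such that $x\in F$ implies $\triangle x\in F$ and $t(x)\in F$. *)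

From HB Require Import structures.
From mathcomp Require Import all_boot all_order.
Set Implicit Arguments. Unset Strict Implicit. Unset Printing Implicit Defensive.
Import Order.TTheory.
Local Open Scope order_scope.

(* An mpM-algebra: a bounded distributive lattice L (mathcomp
   tbDistrLatticeType, with meet `&`, join `|`, \bot = 0, \top = 1)
   together with a De Morgan negation [neg] (~) and a unary operation
   [star] (written x^* in the paper), which is the pseudocomplement, satisfying
   x \/ ~x <= x \/ x^*. *)
Section MPM.
Context {disp : Order.disp_t} {L : tbDistrLatticeType disp}.

Definition is_mpM (neg star : L -> L) : Prop :=
  [/\ (forall x, neg (neg x) = x),
      (forall x y, neg (x `|` y) = neg x `&` neg y),
      (forall x y, (x `&` y == \bot) = (y <= star x)) &
      (forall x, x `|` neg x <= x `|` star x)].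

Definition nabla (neg star : L -> L) (x : L) : L := neg (neg x `&` star x).
Definition delta (neg star : L -> L) (x : L) : L := neg (nabla neg star (neg x)).

Definition is_Ck_aut (neg star : L -> L) (k : nat) (t : L -> L) : Prop :=
  [/\ bijective t,
      (forall x y, t (x `&` y) = t x `&` t y),
      (forall x y, t (x `|` y) = t x `|` t y),
      (forall x, t (neg x) = neg (t x)) &
      (forall x, t (star x) = star (t x))] /\
  [/\ t \bot = \bot,
      t \top = \top &
      (forall x, iter k t x = x)].

Definition cimp (neg star : L -> L) (k : nat) (t : L -> L) (a b : L) : L :=
  (\join_(1 <= i < k.+1) nabla neg star (neg (iter i t a))) `|` b.

Definition cyclic_ds (neg star : L -> L) (k : nat) (t : L -> L) (D : L -> Prop) : Prop :=
  D \top /\ (forall x y, D x -> D (cimp neg star k t x y) -> D y).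

Definition lattice_filter (F : L -> Prop) : Prop :=
  [/\ F \top,
      (forall x y, F x -> x <= y -> F y) &
      (forall x y, F x -> F y -> F (x `&` y))].

Definition c_filter (neg star : L -> L) (t : L -> L) (F : L -> Prop) : Prop :=
  [/\ lattice_filter F,
      (forall x, F x -> F (delta neg star x)) &
      (forall x, F x -> F (t x))].
End MPM.

From Pilot Require Import Defs.
From mathcomp Require Import all_boot all_order.
Set Implicit Arguments. Unset Strict Implicit. Unset Printing Implicit Defensive.
Import Order.TTheory.
Local Open Scope order_scope.

(* The whole argument rests on one lattice fact about an mpM-algebra:
   for every z, the elements [delta z] and [nabla (~ z)] are Boolean
   complements of each other (their meet is 0 and their join is 1), and
   moreover [nabla (~ z) \/ z = 1].  Writing [cjoin x] for the join
   \/_{i=1}^k nabla (~ t^i x), the cyclic implication is [cjoin x \/ y];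
   since t^k = id and k >= 1, [cjoin x] lies above both [nabla (~ x)] and
   [nabla (~ t x)].
   - A cyclic deductive system D is a c-filter: each closure property of D
     follows by modus ponens from an implication [x ~> y] that is equal to
     1 (or above an element of D), by the complement facts above.
   - A c-filter F is a cyclic deductive system: F contains every
     [delta (t^i x)] when it contains x, and [delta u] is disjoint from
     [nabla (~ u)], so the summands of [cjoin x] can be peeled off one at
     a time from [cjoin x \/ y] until only y is left. *)

Section Lattice.
Context {disp : Order.disp_t} {L : tbDistrLatticeType disp}.
Implicit Types x y z u w : L.

Lemma filter_disjoint_elim (F : L -> Prop) a b w :
  lattice_filter F -> a `&` b = \bot -> F a -> F (b `|` w) -> F w.
Proof.
case=> _ up mI ab0 Fa Fbw.
have := mI _ _ Fa Fbw; rewrite meetUr ab0 join0x => Faw.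
exact: up Faw (leIr _ _).
Qed.

Section DeMorgan.
Variable neg : L -> L.
Hypothesis negK : forall x, neg (neg x) = x.
Hypothesis negU : forall x y, neg (x `|` y) = neg x `&` neg y.

Lemma negI x y : neg (x `&` y) = neg x `|` neg y.
Proof. by rewrite -[x `&` y]negK -[x]negK -[y]negK -negU !negK. Qed.

Lemma neg_top : neg \top = \bot.
Proof. by have := negU (neg \bot) \top; rewrite joinx1 negK meet0x. Qed.

Lemma neg_eq0 u : neg u = \bot -> u = \top.
Proof. by move=> nu0; rewrite -[u]negK nu0 -neg_top negK. Qed.

Lemma neg_le x y : x <= y -> neg y <= neg x.
Proof. by move=> /join_idPr <-; rewrite negU leIl. Qed.
End DeMorgan.

Section MPM.
Variables neg star : L -> L.
Hypothesis hA : is_mpM neg star.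

Local Notation nabla := (nabla neg star).
Local Notation delta := (delta neg star).

Lemma mpM_negK x : neg (neg x) = x.
Proof. by case: hA. Qed.

Lemma mpM_negU x y : neg (x `|` y) = neg x `&` neg y.
Proof. by case: hA. Qed.

Lemma meet_star x : x `&` star x = \bot.
Proof. by case: hA => _ _ pc _; apply/eqP; rewrite pc. Qed.

Lemma nablaE x : nabla x = x `|` neg (star x).
Proof. by rewrite /Defs.nabla (negI mpM_negK mpM_negU) mpM_negK. Qed.

Lemma deltaE x : delta x = x `&` star (neg x).
Proof. by rewrite /Defs.delta /Defs.nabla !mpM_negK. Qed.

Lemma neg_delta z : neg (delta z) = nabla (neg z).
Proof. by rewrite /Defs.delta mpM_negK. Qed.

Lemma neg_meet_neg_star x : neg x `&` neg (star x) <= x.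
Proof.
case: hA => _ _ _ ax.
have := neg_le mpM_negU (ax x); rewrite !mpM_negU mpM_negK => h.
exact: le_trans h (leIr _ _).
Qed.

Lemma nabla_neg_joinr z : nabla (neg z) `|` z = \top.
Proof.
apply: (neg_eq0 mpM_negK mpM_negU); rewrite nablaE !mpM_negU !mpM_negK.
apply/eqP; rewrite -lex0 -(meet_star (neg z)).
by rewrite lexI leIr /= (le_trans (leIl _ _) (leIr _ _)).
Qed.

Lemma delta_nabla_meet z : delta z `&` nabla (neg z) = \bot.
Proof.
rewrite -[z]mpM_negK; move: (neg z) => w; rewrite deltaE nablaE !mpM_negK.
apply/eqP; rewrite -lex0 -(meet_star w) meetC meetUl leUx !lexI.
have -> : w `&` (neg w `&` star w) <= star w by rewrite meetA leIr.
have -> : neg (star w) `&` (neg w `&` star w) <= star w by rewrite meetA leIr.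
rewrite leIl /= andbT; apply: le_trans (neg_meet_neg_star w).
by rewrite lexI leIl andbT meetCA leIl.
Qed.

Lemma delta_nabla_join z : delta z `|` nabla (neg z) = \top.
Proof.
apply: (neg_eq0 mpM_negK mpM_negU).
by rewrite mpM_negU neg_delta meetC -[neg (nabla _)]/(delta z) delta_nabla_meet.
Qed.

Section Cyclic.
Variables (k : nat) (t : L -> L).
Hypothesis hk : (1 <= k)%N.
Hypothesis tk : forall x, iter k t x = x.

Definition cjoin x := \join_(1 <= i < k.+1) nabla (neg (iter i t x)).

Lemma cimpE x y : cimp neg star k t x y = cjoin x `|` y.
Proof. by []. Qed.

Lemma le_cjoin i x : (1 <= i <= k)%N -> nabla (neg (iter i t x)) <= cjoin x.
Proof. by move=> hi; apply: (joins_min_seq (x:=i)); rewrite ?mem_index_iota. Qed.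

Lemma nabla_le_cjoin x : nabla (neg x) <= cjoin x.
Proof. by rewrite -{1}(tk x) le_cjoin // hk leqnn. Qed.

Lemma nabla_t_le_cjoin x : nabla (neg (t x)) <= cjoin x.
Proof. exact: (le_cjoin (i:=1)). Qed.

Lemma cimp_top x y z :
  nabla (neg z) <= cjoin x -> nabla (neg z) `|` y = \top ->
  cimp neg star k t x y = \top.
Proof. by move=> le_zx top_zy; apply/eqP; rewrite -le1x -top_zy leU2. Qed.

Lemma c_filter_mp (F : L -> Prop) x y :
  c_filter neg star t F -> F x -> F (cimp neg star k t x y) -> F y.
Proof.
case=> Flat Fdelta Ft Fx; rewrite cimpE /cjoin.
have Fit i : F (iter i t x) by elim: i => //= i IH; apply: Ft.
elim: k y => [|n IH] y; first by rewrite big_geq // join0x.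
rewrite big_nat_recr //= -joinA => /IH.
exact: filter_disjoint_elim Flat (delta_nabla_meet _) (Fdelta _ (Fit n.+1)).
Qed.

Section CyclicDS.
Variable D : L -> Prop.
Hypothesis hD : cyclic_ds neg star k t D.

Lemma cds_top_mp x y : D x -> cimp neg star k t x y = \top -> D y.
Proof. by case: hD => Dtop mp Dx e; apply: (mp x) => //; rewrite e. Qed.

Lemma cds_up x y : D x -> x <= y -> D y.
Proof.
move=> Dx le_xy; apply: (cds_top_mp Dx); apply: cimp_top (nabla_le_cjoin x) _.
by apply/eqP; rewrite -le1x -(nabla_neg_joinr x) leU2.
Qed.

Lemma cds_meet x y : D x -> D y -> D (x `&` y).
Proof.
case: hD => _ mp Dx Dy; apply: (mp y) => //; apply: cds_up Dx _.
rewrite cimpE joinIr lexI leUr /= (_ : cjoin y `|` y = \top) ?lex1 //.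
by apply/eqP; rewrite -le1x -(nabla_neg_joinr y) leU2 // nabla_le_cjoin.
Qed.

Lemma cds_c_filter : c_filter neg star t D.
Proof.
case: hD => Dtop _; split; first split.
- exact: Dtop.
- exact: cds_up.
- exact: cds_meet.
- move=> x Dx; apply: (cds_top_mp Dx); apply: cimp_top (nabla_le_cjoin x) _.
  by rewrite joinC delta_nabla_join.
- move=> x Dx; apply: (cds_top_mp Dx).
  exact: cimp_top (nabla_t_le_cjoin x) (nabla_neg_joinr (t x)).
Qed.
End CyclicDS.
End Cyclic.
End MPM.
End Lattice.

Theorem lemma3p2 (disp : Order.disp_t) (L : tbDistrLatticeType disp)
  (neg star : L -> L) (hA : is_mpM neg star)
  (k : nat) (hk : (1 <= k)%N) (t : L -> L) (ht : is_Ck_aut neg star k t)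
  (F : L -> Prop) :
  cyclic_ds neg star k t F <-> c_filter neg star t F.
Proof.
case: ht => _ [_ _ tk]; split; first exact: (cds_c_filter hA hk tk).
move=> Fc; split; first by case: Fc => -[].
by move=> x y; apply: c_filter_mp Fc.
Qed.
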